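(* Fix $0\le\delta<1/2$. There is a constant $c_\delta>0$ depending only on $\delta$ such that for all integers $m\ge2$ and even $t\ge2$, setting $\sigma:=m^t$ and $\alpha:=2^{\delta t/2}m^{(1-\delta/2)t}$, there exist an integer $g\ge c_\delta\,2^{(1-h(\delta))t}$ and sets $X^{(1)},\dots,X^{(g)},Y^{(1)},\dots,Y^{(g)}\subseteq\{0,1,\dots,\sigma\}$ such that: (1) $|X^{(i)}|=|Y^{(i)}|=\sigma^{1/2}$ for all $1\le i\le g$; (2) $|X^{(i)}+Y^{(i)}|=\sigma$ for all $1\le i\le g$; (3) $|X^{(i)}+Y^{(j)}|\le\alpha$ for all $i\ne j$.
   Context: $h$ is the binary entropy function $h(x)=-x\log_2x-(1-x)\log_2(1-x)$. For sets $P,Q$ of integers, $P+Q=\{p+q:p\in P,q\in Q\}$. *)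

From mathcomp Require Import all_boot.
From Stdlib Require Import Reals.
Set Implicit Arguments. Unset Strict Implicit. Unset Printing Implicit Defensive.

(* A finite set of naturals is represented by a duplicate-free sequence. *)
Definition sumset (P Q : seq nat) : seq nat :=
  undup [seq p + q | p <- P, q <- Q].

(* base-2 logarithm and binary entropy h(x) = -x log2 x - (1-x) log2 (1-x)
   (Stdlib: ln 0 = 0, so h 0 = h 1 = 0 as per the usual convention). *)
Definition log2 (x : R) : R := (ln x / ln 2)%R.
Definition binent (x : R) : R :=
  (- x * log2 x - (1 - x) * log2 (1 - x))%R.

From mathcomp Require Import all_boot zify.
Set Implicit Arguments. Unset Strict Implicit. Unset Printing Implicit Defensive.

(* Write t = 2n and the numbers below sigma = m^t in base m with t digits.
   For a set S of digit positions, X_S consists of the numbers whose digits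
   vanish off S and Y_S of those whose digits vanish on S.  If |S| = n then
   |X_S| = |Y_S| = m^n and X_S + Y_S = [0, m^t).  For |S| = |T|, adding
   x in X_S and y in Y_T digitwise gives a digit < 2 on S \ T, a zero digit
   on T \ S and a digit < m elsewhere, so |X_S + Y_T| <= 2^d m^(t - d) with
   d = |S \ T|, which is at most alpha once d >= delta n.

   For
   delta = 0 the statement is degenerate (alpha = sigma) and 2^t copies of a
   single pair suffice; both cases are assembled from a list of subsets. *)

(* Mixed-radix digit sets: for digit bounds r = [c_0; ...; c_(k-1)],
   digit_set m r is the set of the numbers sum_i d_i m^i with d_i < c_i. *)
Section DigitSets.
Variable m : nat.

Fixpoint digit_set (r : seq nat) : seq nat :=
  match r with
  | [::] => [:: 0]
  | c :: r' => [seq d + m * x | d <- iota 0 c, x <- digit_set r']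
  end.

Lemma size_digit_set r : size (digit_set r) = \prod_(c <- r) c.
Proof.
elim: r => [|c r IH] /=; first by rewrite big_nil.
by rewrite size_allpairs size_iota IH big_cons.
Qed.

Lemma digit_set_lt r : 0 < m -> all (fun c => c <= m) r ->
  forall x, x \in digit_set r -> x < m ^ size r.
Proof.
move=> m0; elim: r => [|c r IH] /=; first by move=> _ x; rewrite inE => /eqP ->.
case/andP=> cm hr x /allpairsP [[d y] /= [hd hy ->]].
have := IH hr y hy; rewrite mem_iota add0n in hd.
rewrite expnS => hy'.
have hd' : d < m by case/andP: hd => _ h; lia.
nia.
Qed.

(* Base-m expansions are unique, so the enumeration has no repetition. *)
Lemma digit_set_uniq r : all (fun c => c <= m) r -> uniq (digit_set r).
Proof.
elim: r => [|c r IH] //= /andP [cm hr].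
apply: allpairs_uniq => //; [exact: iota_uniq | exact: IH |].
move=> [d1' x1'] [d2' x2'] /allpairsP [[d1 x1] /= [h1 _ [-> ->]]].
move=> /allpairsP [[d2 x2] /= [h2 _ [-> ->]]] /= E.
rewrite !mem_iota !add0n in h1 h2.
have m0 : 0 < m by lia.
have Ed : d1 = d2.
  have := congr1 (modn^~ m) E.
  by rewrite /= !(addnC _ (m * _)) !(mulnC m) !modnMDl !modn_small //; lia.
subst d2; congr (_, _); apply/eqP.
by rewrite -(eqn_pmul2l m0) -(eqn_add2l d1) E.
Qed.

(* Digitwise addition: adding a digit < f k and a digit < g k gives a digit
   < f k + g k - 1 (possibly >= m, i.e. without carrying). *)
Lemma digit_set_add (T : Type) (l : seq T) (f g : T -> nat) :
  (forall k, 0 < f k) -> (forall k, 0 < g k) ->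
  forall x y, x \in digit_set (map f l) -> y \in digit_set (map g l) ->
  x + y \in digit_set (map (fun k => f k + g k - 1) l).
Proof.
move=> f0 g0; elim: l => [|k l IH] /= x y.
  by rewrite !inE => /eqP -> /eqP ->.
move=> /allpairsP [[d1 x1] /= [h1 hx ->]] /allpairsP [[d2 y2] /= [h2 hy ->]].
rewrite (_ : d1 + m * x1 + (d2 + m * y2) = (d1 + d2) + m * (x1 + y2)); last by lia.
apply: allpairs_f; last exact: IH.
move: h1 h2; rewrite !mem_iota !add0n /=.
have := f0 k; have := g0 k; lia.
Qed.

Lemma digit_set_complementary (T : Type) (l : seq T) (b : T -> bool) :
  forall y, y < m ^ size l ->
  y \in sumset (digit_set (map (fun k => if b k then m else 1) l))
               (digit_set (map (fun k => if b k then 1 else m) l)).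
Proof.
rewrite /sumset; elim: l => [|k l IH] /= y.
  by rewrite expn0 ltnS leqn0 => /eqP ->; rewrite inE.
rewrite expnS => hy.
have m0 : 0 < m by case: m hy => //; rewrite mul0n.
have hq : y %/ m < m ^ size l by rewrite ltn_divLR // mulnC.
have := IH _ hq; rewrite !mem_undup => /allpairsP [[a c] /= [ha hc E]].
have ym : y = y %% m + m * (y %/ m) by rewrite mulnC addnC -divn_eq.
have hr : y %% m < m by rewrite ltn_mod.
apply/allpairsP; case: (b k).
  exists (y %% m + m * a, 0 + m * c); split.
  - by apply: (allpairs_f (fun d x => d + m * x)) => //; rewrite mem_iota add0n.
  - by apply: (allpairs_f (fun d x => d + m * x)) => //; rewrite mem_iota.
  - rewrite /= {1}ym E; lia.
exists (0 + m * a, y %% m + m * c); split.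
- by apply: (allpairs_f (fun d x => d + m * x)) => //; rewrite mem_iota.
- by apply: (allpairs_f (fun d x => d + m * x)) => //; rewrite mem_iota add0n.
- rewrite /= {1}ym E; lia.
Qed.

End DigitSets.

Definition bounds t (S : {set 'I_t}) (a b : nat) : seq nat :=
  [seq (if k \in S then a else b) | k <- enum 'I_t].

(* X_S: digits free on S, zero off S;  Y_S: the complementary pattern. *)
Definition Xset m t (S : {set 'I_t}) : seq nat := digit_set m (bounds S m 1).
Definition Yset m t (S : {set 'I_t}) : seq nat := digit_set m (bounds S 1 m).

Lemma bounds_leq m t (S : {set 'I_t}) a b : a <= m -> b <= m ->
  all (fun c => c <= m) (bounds S a b).
Proof. by move=> am bm; apply/allP => c /mapP [k _ ->]; case: ifP. Qed.

Lemma prod_bounds t (S : {set 'I_t}) a : \prod_(c <- bounds S a 1) c = a ^ #|S|.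
Proof. by rewrite big_map big_enum /= -big_mkcond /= prod_nat_const. Qed.

Lemma size_Xset m t (S : {set 'I_t}) : size (Xset m S) = m ^ #|S|.
Proof. by rewrite /Xset size_digit_set prod_bounds. Qed.

Lemma size_Yset m t (S : {set 'I_t}) : size (Yset m S) = m ^ #|~: S|.
Proof.
rewrite /Yset size_digit_set -prod_bounds !big_map; apply: eq_bigr => k _.
by rewrite inE; case: (k \in S).
Qed.

Lemma digit_set_ord_lt m t (h : 'I_t -> nat) : 0 < m -> (forall k, h k <= m) ->
  forall x, x \in digit_set m (map h (enum 'I_t)) -> x < m ^ t.
Proof.
move=> m0 hm x /(digit_set_lt m0) hx.
rewrite -(size_enum_ord t) -(size_map h) hx //.
by apply/allP => c /mapP [k _ ->].
Qed.

Lemma size_sumset_diag m t (S : {set 'I_t}) : 0 < m ->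
  size (sumset (Xset m S) (Yset m S)) = m ^ t.
Proof.
move=> m0.
have in_range y : y \in sumset (Xset m S) (Yset m S) -> y < m ^ t.
  rewrite /sumset mem_undup => /allpairsP [[a b] /= [ha hb ->]].
  apply: (digit_set_ord_lt m0 _ (digit_set_add _ _ ha hb)) => k;
    by case: (k \in S); lia.
suff /perm_size : perm_eq (sumset (Xset m S) (Yset m S)) (iota 0 (m ^ t)).
  by rewrite size_iota.
apply: uniq_perm; [exact: undup_uniq | exact: iota_uniq |].
move=> y; rewrite mem_iota add0n /=; apply/idP/idP; first exact: in_range.
move=> hy; have := @digit_set_complementary m _ (enum 'I_t) (fun k => k \in S) y.
by rewrite size_enum_ord; apply.
Qed.

Lemma diagonal_pair_spec m t (S : {set 'I_t}) : 0 < m -> ~~ odd t -> #|S| = t %/ 2 ->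
  [/\ uniq (Xset m S), uniq (Yset m S),
      all (fun x => x <= m ^ t) (Xset m S),
      all (fun y => y <= m ^ t) (Yset m S) &
      [/\ size (Xset m S) = m ^ (t %/ 2), size (Yset m S) = m ^ (t %/ 2)
        & size (sumset (Xset m S) (Yset m S)) = m ^ t]].
Proof.
move=> m0 ev hS.
have bound (a b : nat) x : a <= m -> b <= m ->
    x \in digit_set m (bounds S a b) -> x <= m ^ t.
  move=> am bm hx; apply: ltnW.
  by apply: (digit_set_ord_lt m0 _ hx) => k; case: ifP.
split.
- exact/digit_set_uniq/bounds_leq.
- exact/digit_set_uniq/bounds_leq.
- by apply/allP => x /bound; apply.
- by apply/allP => y /bound; apply.
split; [by rewrite size_Xset hS | | exact: size_sumset_diag].
rewrite size_Yset; congr (_ ^ _).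
have := cardsC S; rewrite hS card_ord.
have := odd_double_half t; rewrite (negbTE ev) add0n -mul2n; lia.
Qed.

Lemma cardsD_sym (T : finType) (S U : {set T}) :
  #|S| = #|U| -> #|U :\: S| = #|S :\: U|.
Proof. by move=> hSU; have := cardsID U S; have := cardsID S U; rewrite setIC hSU; lia. Qed.

(* Cross sumsets: digits of x + y (x in X_S, y in Y_T) are < 2 on S \ T,
   zero on T \ S and < m elsewhere, which gives condition (3) after the
   sets S are chosen far apart. *)
Lemma size_sumset_cross m t (S T : {set 'I_t}) : 0 < m -> #|S| = #|T| ->
  size (sumset (Xset m S) (Yset m T)) <= 2 ^ #|S :\: T| * m ^ (t - #|S :\: T|).
Proof.
move=> m0 hST.
pose h k := (if k \in S then m else 1) + (if k \in T then 1 else m) - 1.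
have sub : {subset sumset (Xset m S) (Yset m T) <= digit_set m (map h (enum 'I_t))}.
  move=> y; rewrite /sumset mem_undup => /allpairsP [[a b] /= [ha hb ->]].
  by apply: digit_set_add ha hb => k; case: ifP.
apply: leq_trans (uniq_leq_size (undup_uniq _) sub) _.
rewrite size_digit_set big_map big_enum /=.
have compl : t - #|S :\: T| = #|~: (T :\: S)|.
  by have := cardsC (T :\: S); rewrite card_ord cardsD_sym //; lia.
apply: (@leq_trans (\prod_(k : 'I_t) ((if k \in S :\: T then 2 else 1) *
                                      (if k \in ~: (T :\: S) then m else 1)))).
  by apply: leq_prod => k _; rewrite /h !inE; case: (k \in S); case: (k \in T) => /=; lia.
by rewrite big_split /= -!big_mkcond /= !prod_nat_const compl.
Qed.

Lemma card_bigcup_leq (T J : finType) (P : pred J) (B : J -> {set T}) :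
  #|\bigcup_(j | P j) B j| <= \sum_(j | P j) #|B j|.
Proof.
elim/big_rec2: _ => [|j x y _ IH]; first by rewrite cards0.
by apply: leq_trans (leq_card_setU _ _) _; rewrite leq_add2l.
Qed.

Section Packing.
Variable I : finType.

Definition near_sets n D (S : {set I}) : {set {set I}} :=
  [set T : {set I} | (#|T| == n) && (#|S :\: T| < D)].

(* Such a T is determined by the pair (S \ T, T \ S), two j-subsets of S and
   of its complement with j < D. *)
Lemma card_near_sets n D (S : {set I}) : #|S| = n ->
  #|near_sets n D S| <= \sum_(j < D) 'C(n, j) * 'C(#|I| - n, j).
Proof.
move=> hS.
pose f T := (S :\: T, T :\: S).
have inj : {in near_sets n D S &, injective f}.
  move=> T1 T2 _ _ [e1 e2].
  have rec T : T = (S :\: (S :\: T)) :|: (T :\: S).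
    by rewrite setDDr setDv set0U setIC setID.
  by rewrite (rec T1) (rec T2) e1 e2.
rewrite -(card_in_imset inj).
pose W := \bigcup_(j < D) setX [set A : {set I} | A \subset S & #|A| == j]
                               [set B : {set I} | B \subset ~: S & #|B| == j].
apply: (@leq_trans #|W|).
  apply: subset_leq_card; apply/subsetP => w /imsetP [T hT ->].
  rewrite inE in hT; case/andP: hT => /eqP hT hD.
  apply/bigcupP; exists (Ordinal hD) => //.
  rewrite !inE /= eqxx subsetDl /= cardsD_sym ?hT ?hS // eqxx andbT.
  by apply/subsetP => z; rewrite !inE => /andP [->].
apply: leq_trans (card_bigcup_leq _ _) _.
apply: leq_sum => j _.
rewrite cardsX !cards_draws hS.
by have := cardsC S; rewrite hS => <-; rewrite addKn.
Qed.

(* A maximal D-separated family of n-subsets: the near-sets of its members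
   cover all n-subsets, hence the counting bound. *)
Lemma gilbert_varshamov (n D : nat) : 0 < D -> exists F : {set {set I}},
  [/\ (forall S, S \in F -> #|S| = n),
      (forall S T, S \in F -> T \in F -> S != T -> D <= #|S :\: T|) &
      'C(#|I|, n) <= #|F| * \sum_(j < D) 'C(n, j) * 'C(#|I| - n, j)].
Proof.
move=> D0.
pose U := [set S : {set I} | #|S| == n].
pose P (F : {set {set I}}) := (F \subset U) &&
   [forall S in F, forall T in F, (S != T) ==> (D <= #|S :\: T|)].
have [F maxF] : {F | maxset P F}.
  apply: ex_maxset; exists set0.
  by rewrite /P sub0set /=; apply/forall_inP => S; rewrite inE.
have /andP [FU /forall_inP Fsep] := maxsetp maxF.
have sizeF S : S \in F -> #|S| = n by move=> /(subsetP FU); rewrite inE => /eqP.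
exists F; split => //.
  by move=> S T hS hT hST; have /forall_inP /(_ T hT) := Fsep S hS; rewrite hST.
have cover : U \subset \bigcup_(S in F) near_sets n D S.
  apply/subsetP => T hT; apply/negPn/negP => nc.
  have hTn : #|T| = n by move: hT; rewrite inE => /eqP.
  have far S : S \in F -> D <= #|S :\: T|.
    move=> hS; rewrite leqNgt; apply/negP => lt; apply: (negP nc).
    by apply/bigcupP; exists S => //; rewrite inE hTn eqxx.
  have PT : P (T |: F).
    apply/andP; split.
      by apply/subsetP => S; rewrite in_setU1 => /orP [/eqP -> //|/(subsetP FU)].
    apply/forall_inP => S1; rewrite in_setU1 => /orP [/eqP ->|h1];
      apply/forall_inP => S2; rewrite in_setU1 => /orP [/eqP ->|h2].
    - by rewrite eqxx.
    - by apply/implyP => _; rewrite cardsD_sym ?far // sizeF.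
    - by apply/implyP => _; apply: far.
    - by have /forall_inP /(_ S2 h2) := Fsep S1 h1.
  case/maxsetP: maxF => _ /(_ _ PT (subsetUr _ _)) eqF.
  apply: (negP nc); apply/bigcupP; exists T; first by rewrite -eqF setU11.
  by rewrite inE hTn eqxx setDv cards0.
rewrite -card_draws -sum_nat_const.
apply: leq_trans (subset_leq_card cover) _.
apply: leq_trans (card_bigcup_leq _ _) _.
by apply: leq_sum => S hS; apply: card_near_sets; apply: sizeF.
Qed.

End Packing.

(* The Stdlib reals are imported only here: from now on "^" on nat denotes
   Nat.pow, as in the statement of the theorem, whereas the lemmas above are
   stated with ssrnat's expn. *)
From Stdlib Require Import Reals Lra ZArith.

Lemma natpowE m n : m ^ n = expn m n.
Proof. by elim: n => [|n IH] //=; rewrite expnS -IH. Qed.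

Lemma leq_INR m n : m <= n -> (INR m <= INR n)%R.
Proof. by move=> /leP; apply: le_INR. Qed.

Lemma INR_leq m n : (INR m <= INR n)%R -> m <= n.
Proof. by move=> h; apply/leP; apply: INR_le. Qed.

Lemma INR_ltn m n : (INR m < INR n)%R -> m < n.
Proof. by move=> h; apply/ltP; apply: INR_lt. Qed.

Lemma INR_muln m n : INR (m * n) = (INR m * INR n)%R.
Proof. exact: mult_INR. Qed.

Lemma INR_expn m n : INR (expn m n) = (INR m ^ n)%R.
Proof. by rewrite -natpowE pow_INR. Qed.

Lemma INR_double n : INR n.*2 = (2 * INR n)%R.
Proof. by rewrite -mul2n mult_INR. Qed.

Lemma INR_binomial n k : k <= n -> INR 'C(n, k) = C n k.
Proof.
have factE j : j`! = fact j by elim: j => //= j IH; rewrite factS IH.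
move=> kn; rewrite /C; change (Init.Nat.sub n k) with (n - k).
rewrite -!factE -(bin_fact kn) !mult_INR.
have h1 : INR k`! <> 0%R by apply: not_0_INR; have := fact_gt0 k; lia.
have h2 : INR (n - k)`! <> 0%R by apply: not_0_INR; have := fact_gt0 (n - k); lia.
by field.
Qed.

Lemma ln2_pos : (0 < ln 2)%R.
Proof. rewrite -ln_1; apply: ln_increasing; lra. Qed.

Lemma exp_le x y : (x <= y)%R -> (exp x <= exp y)%R.
Proof. by case=> [h|->]; [left; apply: exp_increasing | lra]. Qed.

Lemma pow_exp x n : (0 < x)%R -> (x ^ n = exp (INR n * ln x))%R.
Proof. by move=> x0; rewrite -ln_pow // exp_ln //; apply: pow_lt. Qed.

Lemma le_div a b c : (0 < c)%R -> (a * c <= b)%R -> (a <= b / c)%R.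
Proof.
move=> c0 h; apply: (Rmult_le_reg_r c) => //.
by rewrite /Rdiv Rmult_assoc Rinv_l; lra.
Qed.

Lemma div_le a b c : (0 < c)%R -> (a <= b * c)%R -> (a / c <= b)%R.
Proof.
move=> c0 h; apply: (Rmult_le_reg_r c) => //.
by rewrite /Rdiv Rmult_assoc Rinv_l; lra.
Qed.

Fixpoint rsum (f : nat -> R) (N : nat) : R :=
  match N with O => 0%R | S N' => (rsum f N' + f N')%R end.

Lemma rsum_ge0 f N : (forall i, 0 <= f i)%R -> (0 <= rsum f N)%R.
Proof. by move=> h; elim: N => /= [|N IH]; [lra | have := h N; lra]. Qed.

Lemma rsum_mono f N M : (forall i, 0 <= f i)%R -> N <= M -> (rsum f N <= rsum f M)%R.
Proof.
move=> h; elim: M => [|M IH]; first by rewrite leqn0 => /eqP ->; lra.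
rewrite leq_eqVlt => /orP [/eqP ->|]; first lra.
by rewrite ltnS => /IH /=; have := h M; lra.
Qed.

Lemma rsum_shift f a N : rsum f (a + N) = (rsum f a + rsum (fun i => f (a + i)%nat) N)%R.
Proof. by elim: N => [|N IH] /=; [rewrite addn0; lra | rewrite addnS /= IH; lra]. Qed.

Lemma rsum_le f g N : (forall i, i < N -> (f i <= g i)%R) -> (rsum f N <= rsum g N)%R.
Proof.
elim: N => [|N IH] h /=; first lra.
by have := h N (ltnSn N); have := IH (fun i hi => h i (ltnW hi)); lra.
Qed.

Lemma rsum_scale c f N : rsum (fun i => c * f i)%R N = (c * rsum f N)%R.
Proof. by elim: N => /= [|N IH]; [lra | rewrite IH; lra]. Qed.

Lemma rsum_const c N : rsum (fun _ => c) N = (INR N * c)%R.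
Proof. by elim: N => [|N IH]; [rewrite /=; lra | rewrite [LHS]/= IH S_INR; lra]. Qed.

Lemma INR_sum D (f : nat -> nat) : INR (\sum_(j < D) f j) = rsum (fun j => INR (f j)) D.
Proof. by elim: D => [|D IH]; [rewrite big_ord0 | rewrite big_ord_recr /= plus_INR IH]. Qed.

Definition binp n p j := (INR 'C(n, j) * p ^ j * (1 - p) ^ (n - j))%R.

Lemma binp_ge0 n p j : (0 <= p <= 1)%R -> (0 <= binp n p j)%R.
Proof.
move=> hp; rewrite /binp; have := pos_INR 'C(n, j).
have := pow_le p j; have := pow_le (1 - p) (n - j); move=> h1 h2 h3.
by apply: Rmult_le_pos; [apply: Rmult_le_pos|]; [| apply: h2 |apply: h1]; lra.
Qed.

Lemma binp_sum n p : rsum (binp n p) n.+1 = 1%R.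
Proof.
have rsumE f N : rsum f N.+1 = sum_f_R0 f N.
  by elim: N => /= [|N IH]; [rewrite Rplus_0_l | rewrite -IH].
rewrite rsumE.
have := binomial p (1 - p) n; rewrite (_ : p + (1 - p) = 1)%R; last lra.
rewrite pow1 => ->; apply: sum_eq => i hi.
by rewrite /binp INR_binomial //; apply/leP.
Qed.

Section BinomialMode.
Variables (n : nat) (p : R).
Hypothesis p01 : (0 < p < 1)%R.

Let p01' : (0 <= p <= 1)%R. Proof. lra. Qed.

Lemma binp_run_le1 k N : k + N <= n.+1 -> (rsum (fun i => binp n p (k + i)) N <= 1)%R.
Proof.
move=> kN; have := rsum_shift (binp n p) k N.
have := rsum_mono (fun i => binp_ge0 n i p01') kN.
have := rsum_ge0 k (fun i => binp_ge0 n i p01').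
by rewrite binp_sum; lra.
Qed.

Lemma binp_le1 j : (binp n p j <= 1)%R.
Proof.
case: (leqP j n) => jn; last by rewrite /binp bin_small //= !Rmult_0_l; lra.
by have := @binp_run_le1 j 1; rewrite /= addn0 Rplus_0_l; apply; lia.
Qed.

Lemma binp_ratio j : j < n ->
  binp n p j.+1 = (binp n p j * (INR (n - j) * p) / (INR j.+1 * (1 - p)))%R.
Proof.
move=> jn.
have e : (INR 'C(n, j.+1) * INR j.+1 = INR 'C(n, j) * INR (n - j))%R.
  by rewrite -!INR_muln mulnC mul_bin_left mulnC.
have hq : (1 - p <> 0)%R by lra.
have hj : INR j.+1 <> 0%R by apply: not_0_INR.
have Hk : n - j = (n - j.+1).+1 by lia.
rewrite /binp; rewrite Hk in e *; set k := n - j.+1.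
have -> : INR 'C(n, j.+1) = (INR 'C(n, j) * INR k.+1 / INR j.+1)%R by rewrite -e; field.
by rewrite [(p ^ j.+1)%R]/= [((1 - p) ^ k.+1)%R]/=; field.
Qed.

Lemma binp_step L j : (2 * (INR L + 1) ^ 2 <= INR n * p * (1 - p))%R ->
  (INR j + 1 <= INR n * p + INR L)%R ->
  (binp n p j * (1 - (INR L + 1) / (INR n * p * (1 - p))) <= binp n p j.+1)%R.
Proof.
set q := (1 - p)%R; set A := (INR n * p * q)%R => hL hj.
have L0 := pos_INR L; have j0 := pos_INR j.
have A0 : (0 < A)%R by nra.
have nq : (0 <= INR n * q)%R by rewrite /q; have := pos_INR n; nra.
have Aq : (A <= INR n * q)%R by rewrite /A /q in nq *; nra.
have jn : j < n by apply: INR_ltn; rewrite /q in Aq; nra.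
rewrite binp_ratio //.
set a := INR (n - j); set b := INR j.+1.
have ha : (INR n * q - INR L + 1 <= a)%R.
  by rewrite /a minus_INR; [rewrite /q; nra | apply/leP; apply: ltnW].
have hb : (b <= INR n * p + INR L)%R by rewrite /b S_INR; lra.
have hb0 : (0 < b)%R by rewrite /b; apply: lt_0_INR; apply/ltP.
have hr : (1 - (INR L + 1) / A <= a * p / (b * q))%R.
  apply: le_div; first by rewrite /q; nra.
  apply: (Rmult_le_reg_r A) => //.
  have -> : ((1 - (INR L + 1) / A) * (b * q) * A = (A - (INR L + 1)) * (b * q))%R.
    by field; lra.
  have e1 : ((A - (INR L + 1)) * (b * q) <=
             (A - (INR L + 1)) * ((INR n * p + INR L) * q))%R.
    by apply: Rmult_le_compat_l; [nra | apply: Rmult_le_compat_r; rewrite /q; lra].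
  have e2 : ((INR n * q - INR L + 1) * p * A <= a * p * A)%R.
    by apply: Rmult_le_compat_r; [lra | apply: Rmult_le_compat_r; lra].
  have key : ((INR n * q - INR L + 1) * p * A
              - (A - (INR L + 1)) * ((INR n * p + INR L) * q)
             = A * (p + 1) + (INR L + 1) * INR L * q)%R by rewrite /A /q; ring.
  have : (0 <= (INR L + 1) * INR L * q)%R by apply: Rmult_le_pos; rewrite /q; nra.
  nra.
have := binp_ge0 n j p01'.
have -> : (binp n p j * (a * p) / (b * (1 - p)) = binp n p j * (a * p / (b * q)))%R.
  by rewrite /q /Rdiv; ring.
move=> b0; apply: Rmult_le_compat_l => //.
Qed.

Lemma binp_slow_decay L k i : (2 * (INR L + 1) ^ 2 <= INR n * p * (1 - p))%R ->
  (INR k <= INR n * p)%R -> i <= L ->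
  (binp n p k * (1 - INR i * ((INR L + 1) / (INR n * p * (1 - p))))
     <= binp n p (k + i))%R.
Proof.
set c := ((INR L + 1) / (INR n * p * (1 - p)))%R => hL hk.
have A0 : (0 < INR n * p * (1 - p))%R by have := pos_INR L; nra.
have c0 : (0 <= c)%R by apply: Rle_mult_inv_pos; [have := pos_INR L | ]; lra.
have c1 : (c <= 1)%R.
  by apply: div_le => //; have := pos_INR L; nra.
have bk := binp_ge0 n k p01'.
elim: i => [|i IH] hi; first by rewrite addn0 /=; lra.
have hiL : (INR i + 1 <= INR L)%R by rewrite -S_INR; apply: leq_INR.
have step : (binp n p (k + i) * (1 - c) <= binp n p (k + i).+1)%R.
  by apply: binp_step => //; rewrite plus_INR; lra.
have := IH (ltnW hi); rewrite addnS S_INR => hbm.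
have -> : (binp n p k * (1 - (INR i + 1) * c) =
           binp n p k * (1 - INR i * c) * (1 - c) - binp n p k * (INR i * c * c))%R.
  by ring.
have : (0 <= binp n p k * (INR i * c * c))%R.
  by apply: Rmult_le_pos => //; apply: Rmult_le_pos => //; apply: Rmult_le_pos => //; apply: pos_INR.
have : (binp n p k * (1 - INR i * c) * (1 - c) <= binp n p (k + i) * (1 - c))%R.
  by apply: Rmult_le_compat_r; lra.
lra.
Qed.

Lemma exists_sqrt_floor (x : R) : (1 <= x)%R ->
  exists L : nat, ((INR L + 1) ^ 2 <= x < (INR L + 2) ^ 2)%R.
Proof.
move=> x1; have [N hN] := INR_unbounded x.
have : (x < (INR N + 1) ^ 2)%R by have := pos_INR N; nra.
elim: N {hN} => [|N IH] hx; first by rewrite /= in hx; lra.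
have [h|h] := Rlt_or_le x ((INR N + 1) ^ 2)%R; first exact: IH.
by exists N; split => //; rewrite S_INR in hx; lra.
Qed.

(* Left of the mean, atoms are O(1 / sqrt(n p (1 - p))): otherwise the
   sqrt (A / 2) atoms following the k-th would carry mass exceeding 1. *)
Lemma binp_left_of_mean k : 0 < n -> (INR k <= INR n * p)%R ->
  (binp n p k ^ 2 <= 32 / (INR n * p * (1 - p)))%R.
Proof.
set A := (INR n * p * (1 - p))%R => n0 hk.
have b0 := binp_ge0 n k p01'.
have k0 := pos_INR k.
have A0 : (0 < A)%R.
  have : (0 < INR n)%R by apply: lt_0_INR; apply/ltP.
  by rewrite /A => ?; repeat apply: Rmult_lt_0_compat; lra.
have [A2|A2] := Rlt_or_le A 2.
  have := binp_le1 k => b1; apply: Rle_trans (_ : 1 <= _)%R; first nra.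
  by apply: le_div => //; lra.
have [L [hL1 hL2]] := @exists_sqrt_floor (A / 2) ltac:(lra).
have L0 := pos_INR L.
set c := ((INR L + 1) / A)%R.
have Lc : (INR L * c <= 1 / 2)%R.
  have -> : (INR L * c = INR L * (INR L + 1) / A)%R by rewrite /c; field; lra.
  by apply: div_le => //; nra.
have half i : i < L + 1 -> (binp n p k / 2 <= binp n p (k + i))%R.
  move=> hi; have hi' : i <= L by lia.
  have := binp_slow_decay (L := L) ltac:(rewrite -/A; lra) hk hi'; rewrite -/A -/c.
  have : (INR i * c <= INR L * c)%R.
    by apply: Rmult_le_compat_r; [rewrite /c; apply: Rle_mult_inv_pos; lra | apply: leq_INR].
  nra.
have run : ((INR L + 1) * (binp n p k / 2) <= 1)%R.
  have -> : (INR L + 1 = INR (L + 1))%R by rewrite plus_INR.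
  rewrite -rsum_const; apply: Rle_trans (rsum_le half) _.
  apply: binp_run_le1; apply: INR_leq; rewrite !plus_INR !S_INR (_ : INR 0 = 0%R) //.
  have hLA : (INR L + 1 <= A / 2)%R by nra.
  have nq : (0 <= INR n * (1 - p))%R by have := pos_INR n; nra.
  have : (A <= INR n * (1 - p))%R by rewrite /A; nra.
  lra.
apply: le_div; first lra.
have : (A < 8 * (INR L + 1) ^ 2)%R by nra.
have : (0 <= binp n p k * (INR L + 1) <= 2)%R by split; nra.
nra.
Qed.

End BinomialMode.

Lemma binp_sym n p k : k <= n -> binp n p k = binp n (1 - p) (n - k).
Proof.
move=> kn; rewrite /binp bin_sub // subKn // (_ : (1 - (1 - p))%R = p); last ring.
by ring.
Qed.

(* Every atom of B(n, p) is at most sqrt (32 / (n p (1 - p))); atoms right of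
   the mean are atoms of B(n, 1 - p) left of its mean. *)
Lemma binp_max n p k : (0 < p < 1)%R -> 0 < n ->
  (binp n p k ^ 2 <= 32 / (INR n * p * (1 - p)))%R.
Proof.
move=> hp n0.
have nR : (1 <= INR n)%R by apply: (leq_INR (m := 1)).
have A0 : (0 < INR n * p * (1 - p))%R by repeat apply: Rmult_lt_0_compat; lra.
case: (leqP k n) => kn; last first.
  rewrite /binp bin_small //=; have : (0 <= 32 / (INR n * p * (1 - p)))%R.
    by apply: Rle_mult_inv_pos; lra.
  by lra.
have [hk|hk] := Rle_or_lt (INR k) (INR n * p); first exact: binp_left_of_mean.
rewrite binp_sym //.
have := @binp_left_of_mean n (1 - p) ltac:(lra) (n - k) n0.
rewrite (_ : (1 - (1 - p))%R = p); last ring.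
rewrite (_ : (INR n * (1 - p) * p)%R = (INR n * p * (1 - p))%R); last ring.
by apply; rewrite minus_INR; [lra | apply/leP].
Qed.

(* Natural-log entropy term: ent p = -h(p) ln 2, so exp (- n ent p)
   = 2^(n h(p)). *)
Definition ent p := (p * ln p + (1 - p) * ln (1 - p))%R.

Lemma binomial_le_binp n p j : (0 < p < 1/2)%R -> j <= n -> (INR j <= INR n * p)%R ->
  (INR 'C(n, j) <= binp n p j * exp (- (INR n * ent p)))%R.
Proof.
move=> hp jn hj.
have lnpq : (ln p <= ln (1 - p))%R by left; apply: ln_increasing; lra.
have weight : (1 <= p ^ j * (1 - p) ^ (n - j) * exp (- (INR n * ent p)))%R.
  rewrite !pow_exp; try lra.
  rewrite -!exp_plus; apply: Rle_trans (Req_le _ _ (esym exp_0)) (exp_le _).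
  rewrite minus_INR; last exact/leP.
  have -> : (INR j * ln p + (INR n - INR j) * ln (1 - p) +
     - (INR n * ent p) = (INR n * p - INR j) * (ln (1 - p) - ln p))%R.
    by rewrite /ent; ring.
  by apply: Rmult_le_pos; lra.
have C0 := pos_INR 'C(n, j).
rewrite /binp !Rmult_assoc -(Rmult_assoc (p ^ j)).
by rewrite -{1}(Rmult_1_r (INR _)); apply: Rmult_le_compat_l.
Qed.

(* The sum over the Hamming ball: sum_(j < D) C(n, j)^2 with D <= n p + 1 is
   at most sqrt (32 / (n p (1 - p))) 2^(2 n h(p)), since each term is
   C(n, j) * C(n, j) <= (max atom) * 2^(2 n h(p)) * P[B = j]. *)
Lemma ball_sum_bound n p D : (0 < p < 1/2)%R -> 0 < n -> (INR D <= INR n * p + 1)%R ->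
  (INR (\sum_(j < D) 'C(n, j) * 'C(n, j)) <=
   sqrt (32 / (INR n * p * (1 - p))) * exp (- (INR n * ent p)) ^ 2)%R.
Proof.
move=> hp n0 hD.
have hp' : (0 <= p <= 1)%R by lra.
set s := sqrt _; set Z := exp _.
have Z0 : (0 < Z)%R by apply: exp_pos.
have s0 : (0 <= s)%R by apply: sqrt_pos.
rewrite (INR_sum D (fun j => 'C(n, j) * 'C(n, j))).
have Dn : D <= n.+1 by apply: INR_leq; rewrite S_INR; have := pos_INR n; nra.
apply: Rle_trans (_ : rsum (fun j => s * Z ^ 2 * binp n p j) D <= _)%R.
  apply: rsum_le => j hj.
  have jD : (INR j + 1 <= INR D)%R by rewrite -S_INR; apply: leq_INR.
  have hjC : (INR 'C(n, j) <= binp n p j * Z)%R.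
    by apply: binomial_le_binp => //; [lia | lra].
  have b0 := binp_ge0 n j hp'.
  have bs : (binp n p j <= s)%R.
    by rewrite -(sqrt_pow2 (binp n p j)) //; apply: sqrt_le_1_alt; apply: binp_max => //; lra.
  have C0 := pos_INR 'C(n, j).
  rewrite INR_muln; apply: Rle_trans (Rmult_le_compat _ _ _ _ C0 C0 hjC hjC) _.
  have : (0 <= (s - binp n p j) * (binp n p j * Z ^ 2))%R.
    by apply: Rmult_le_pos; [lra | apply: Rmult_le_pos => //; apply: pow_le; lra].
  by rewrite /=; lra.
rewrite rsum_scale.
have := rsum_mono (fun i => binp_ge0 n i hp') Dn.
rewrite binp_sum.
have : (0 <= s * Z ^ 2)%R by apply: Rmult_le_pos => //; apply: pow_le; lra.
by nra.
Qed.

Lemma central_binomial_rec n :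
  'C((n.+1).*2, n.+1) * n.+1 = 2 * (n.*2).+1 * 'C(n.*2, n).
Proof.
have r1 := mul_bin_diag (n.*2).+2 n.
have r2 := mul_bin_diag (n.*2).+1 n.
have e : 'C((n.*2).+1, n) = 'C((n.*2).+1, n.+1).
  by rewrite -bin_sub; [congr 'C(_, _) | ]; lia.
have -> : (n.+1).*2 = (n.*2).+2 by rewrite doubleS.
rewrite /= e in r1 r2.
have d2b : 'C((n.*2).+2, n.+1) = 2 * 'C((n.*2).+1, n.+1).
  apply/eqP; rewrite -(eqn_pmul2l (ltn0Sn n)) -r1; apply/eqP; lia.
by rewrite d2b -mulnA (mulnC _ n.+1) -r2; lia.
Qed.

Lemma central_binomial_lower n : 0 < n -> (16 ^ n <= INR 'C(n.*2, n) ^ 2 * (4 * INR n))%R.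
Proof.
elim: n => // n IH _.
case: (posnP n) => [->|n0]; first by rewrite /=; lra.
have {}IH := IH n0.
have nR : (1 <= INR n)%R by apply: (leq_INR (m := 1)).
have rec : (INR 'C((n.+1).*2, n.+1) * (INR n + 1) = 2 * (2 * INR n + 1) * INR 'C(n.*2, n))%R.
  have := congr1 INR (central_binomial_rec n).
  by rewrite !INR_muln !S_INR INR_double INR_0 => ->; ring.
set c := INR 'C(n.*2, n) in IH rec *.
set c2 := INR 'C((n.+1).*2, n.+1) in rec *.
have c0 : (0 <= c)%R by apply: pos_INR.
rewrite S_INR.
apply: (Rmult_le_reg_r (INR n + 1)); first lra.
have -> : (c2 ^ 2 * (4 * (INR n + 1)) * (INR n + 1) = 4 * (c2 * (INR n + 1)) ^ 2)%R by ring.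
rewrite rec /=.
have : (4 * INR n * (INR n + 1) <= (2 * INR n + 1) * (2 * INR n + 1))%R by nra.
have : (0 <= 16 ^ n)%R by apply: pow_le; lra.
simpl in IH; nra.
Qed.

Lemma Rpower_entropy n p : (0 < p < 1)%R ->
  Rpower 2 ((1 - binent p) * INR n.*2) = (4 ^ n * exp (2 * INR n * ent p))%R.
Proof.
move=> hp; rewrite /Rpower /binent /log2 /ent INR_double.
have l2 := ln2_pos.
have -> : ((1 - (- p * (ln p / ln 2) - (1 - p) * (ln (1 - p) / ln 2))) * (2 * INR n) * ln 2
          = INR n.*2 * ln 2 + 2 * INR n * (p * ln p + (1 - p) * ln (1 - p)))%R.
  by rewrite INR_double; field; lra.
rewrite exp_plus -pow_exp; last lra.
by congr (_ * _)%R; rewrite -mul2n pow_mult (_ : (2 ^ 2 = 4)%R) //; simpl; ring.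
Qed.

Lemma packing_size_lower_bound n p g D : (0 < p < 1/2)%R -> 0 < n ->
  (INR D <= INR n * p + 1)%R ->
  'C(n.*2, n) <= g * \sum_(j < D) 'C(n, j) * 'C(n, j) ->
  (INR g >= sqrt (p * (1 - p) / 128) * Rpower 2 ((1 - binent p) * INR n.*2))%R.
Proof.
move=> hp n0 hD hC.
have nR : (1 <= INR n)%R by apply: (leq_INR (m := 1)).
have hV := ball_sum_bound hp n0 hD.
have hc := central_binomial_lower n0.
move: hC hV hc; set Vn := \sum_(j < D) _; set Cn := 'C(n.*2, n) => hC hV hc.
rewrite Rpower_entropy; last lra.
set Z := exp (- (INR n * ent p)) in hV; set W := exp (2 * INR n * ent p).
have ZW : (Z ^ 2 * W = 1)%R.
  by rewrite /Z /W /= Rmult_1_r -!exp_plus -exp_0; congr exp; ring.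
have W0 : (0 < W)%R by apply: exp_pos.
have A0 : (0 < INR n * p * (1 - p))%R by repeat apply: Rmult_lt_0_compat; lra.
set s := sqrt (32 / (INR n * p * (1 - p))) in hV.
set s' := sqrt (p * (1 - p) / 128).
have s0 : (0 < s)%R by apply: sqrt_lt_R0; apply: Rdiv_lt_0_compat; lra.
have s'0 : (0 <= s')%R by apply: sqrt_pos.
have g0 := pos_INR g.
(* C(2n, n) <= g V <= g s Z^2, i.e. C(2n, n) W <= g s. *)
have hCW : (INR Cn * W <= INR g * s)%R.
  have hC' : (INR Cn <= INR g * INR Vn)%R by rewrite -INR_muln; apply: leq_INR.
  have : (INR Cn * W <= INR g * (s * Z ^ 2) * W)%R.
    apply: Rmult_le_compat_r; first lra.
    by apply: Rle_trans hC' _; apply: Rmult_le_compat_l.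
  have -> : (INR g * (s * Z ^ 2) * W = INR g * s * (Z ^ 2 * W))%R by ring.
  by rewrite ZW Rmult_1_r.
have ss' : (s * s' = sqrt (/ (4 * INR n)))%R.
  rewrite /s /s' -sqrt_mult.
  - by congr sqrt; field; lra.
  - by apply: Rle_mult_inv_pos; lra.
  - by apply: Rle_mult_inv_pos; [apply: Rmult_le_pos|]; lra.
have cb : (4 ^ n * sqrt (/ (4 * INR n)) <= INR Cn)%R.
  apply: Rsqr_incr_0_var; last exact: pos_INR.
  rewrite !Rsqr_pow2 Rpow_mult_distr pow2_sqrt;
    last by apply: Rlt_le; apply: Rinv_0_lt_compat; lra.
  rewrite -pow_mult Nat.mul_comm pow_mult (_ : (4 ^ 2 = 16)%R); last by simpl; ring.
  apply: (Rmult_le_reg_r (4 * INR n)); first lra.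
  by rewrite Rmult_assoc Rinv_l; lra.
apply: Rle_ge; apply: (Rmult_le_reg_r s) => //; apply: Rle_trans hCW.
have -> : (s' * (4 ^ n * W) * s = (4 ^ n * (s * s')) * W)%R by ring.
by rewrite ss'; apply: Rmult_le_compat_r; lra.
Qed.

(* Since m >= 2, 2^d m^(t - d) decreases in d; for d >= delta t / 2 it is
   at most alpha = 2^(delta t / 2) m^((1 - delta / 2) t). *)
Lemma mixed_power_le_alpha m t d delta : 2 <= m -> d <= t ->
  (delta * INR t / 2 <= INR d)%R ->
  (INR (expn 2 d * expn m (t - d)) <=
   Rpower 2 (delta * INR t / 2) * Rpower (INR m) ((1 - delta / 2) * INR t))%R.
Proof.
move=> hm dt hd.
have l2 := ln2_pos.
have mR : (2 <= INR m)%R by apply: (leq_INR (m := 2)).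
have lm : (ln 2 <= ln (INR m))%R.
  by case: mR => [h|<-]; [left; apply: ln_increasing => //; lra | lra].
rewrite INR_muln !INR_expn /Rpower (_ : INR 2 = 2%R) //.
rewrite !pow_exp; try lra.
rewrite -!exp_plus; apply: exp_le.
rewrite minus_INR; last exact/leP.
have key : (delta * INR t / 2 * ln 2 + (1 - delta / 2) * INR t * ln (INR m) -
           (INR d * ln 2 + (INR t - INR d) * ln (INR m)) =
           (INR d - delta * INR t / 2) * (ln (INR m) - ln 2))%R by field.
have : (0 <= (INR d - delta * INR t / 2) * (ln (INR m) - ln 2))%R by apply: Rmult_le_pos; lra.
lra.
Qed.

Definition separated_pairs (c delta : R) (m t : nat) : Prop :=
  exists (g : nat) (X Y : nat -> seq nat),
    (INR g >= c * Rpower 2 ((1 - binent delta) * INR t))%R /\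
    (forall i, i < g ->
       [/\ uniq (X i), uniq (Y i),
           all (fun x => x <= m ^ t) (X i),
           all (fun y => y <= m ^ t) (Y i) &
           [/\ size (X i) = m ^ (t %/ 2), size (Y i) = m ^ (t %/ 2)
             & size (sumset (X i) (Y i)) = m ^ t]]) /\
    (forall i j, i < g -> j < g -> i <> j ->
       (INR (size (sumset (X i) (Y j))) <=
        Rpower 2 (delta * INR t / 2) * Rpower (INR m) ((1 - delta / 2) * INR t))%R).

(* Any long enough list of (t/2)-subsets of [0, t), pairwise at distance at
   least delta t / 2 (distinct positions may carry equal sets when delta = 0),
   yields the required pairs (X_S, Y_S). *)
Lemma separated_pairs_of_seq c delta m t (s : seq {set 'I_t}) :
  2 <= m -> ~~ odd t ->
  (forall S, S \in s -> #|S| = t %/ 2) ->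
  (forall i j, i < size s -> j < size s -> i <> j ->
     (delta * INR t / 2 <= INR #|nth set0 s i :\: nth set0 s j|)%R) ->
  (INR (size s) >= c * Rpower 2 ((1 - binent delta) * INR t))%R ->
  separated_pairs c delta m t.
Proof.
move=> hm ev sizes far count.
have m0 : 0 < m by lia.
have sizeN i : i < size s -> #|nth set0 s i| = t %/ 2 by move=> hi; apply/sizes/mem_nth.
exists (size s), (fun i => Xset m (nth set0 s i)), (fun i => Yset m (nth set0 s i)).
split; [exact: count | split].
  by move=> i hi; rewrite !natpowE; apply: diagonal_pair_spec => //; apply: sizeN.
move=> i j hi hj hij; set d := #|nth set0 s i :\: nth set0 s j|.
have dt : d <= t by rewrite -[t]card_ord max_card.
have hsz : #|nth set0 s i| = #|nth set0 s j| by rewrite !sizeN.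
apply: Rle_trans (leq_INR (size_sumset_cross m0 hsz)) _.
exact: mixed_power_le_alpha hm dt (far i j hi hj hij).
Qed.

(* delta = 0: alpha = sigma, and 2^t copies of one pair suffice. *)
Lemma separated_pairs_delta0 m t : 2 <= m -> ~~ odd t -> separated_pairs 1 0 m t.
Proof.
move=> hm ev.
have [S hS] : exists S : {set 'I_t}, #|S| = t %/ 2.
  have : 0 < #|[set A : {set 'I_t} | #|A| == t %/ 2]|.
    by rewrite card_draws card_ord bin_gt0 leq_div.
  by case/card_gt0P => S; rewrite inE => /eqP hS; exists S.
apply: (@separated_pairs_of_seq _ _ _ _ (nseq (expn 2 t) S)) => //.
- by move=> T /nseqP [-> _].
- by move=> i j _ _ _; apply: (Rle_trans _ 0); [lra | apply: pos_INR].
- rewrite size_nseq INR_expn /binent /log2 Rminus_0_r ln_1.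
  rewrite (_ : (1 - (- 0 * (ln 0 / ln 2) - 1 * (0 / ln 2))) * INR t = INR t)%R;
    last by field; have := ln2_pos; lra.
  by rewrite Rpower_pow; [rewrite (_ : INR 2 = 2%R) //; lra | lra].
Qed.

Lemma exists_nat_above (x : R) : (0 < x)%R ->
  exists D : nat, 0 < D /\ (x < INR D <= x + 1)%R.
Proof.
move=> x0; have [h1 h2] := archimed x.
have u0 : (0 <= up x)%Z by apply: le_IZR; lra.
exists (Z.to_nat (up x)).
have e : INR (Z.to_nat (up x)) = IZR (up x) by rewrite INR_IZR_INZ Z2Nat.id.
split; last by rewrite e; lra.
by apply/ltP; apply: INR_lt; rewrite e /=; lra.
Qed.

(* 0 < delta < 1/2: a Gilbert-Varshamov family of (t/2)-subsets at pairwise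
   distance D > delta t / 2. *)
Lemma separated_pairs_pos delta m t : (0 < delta < 1/2)%R -> 2 <= m -> 2 <= t -> ~~ odd t ->
  separated_pairs (sqrt (delta * (1 - delta) / 128)) delta m t.
Proof.
move=> hd hm ht ev; set n := t %/ 2.
have tn : t = n.*2 by rewrite -[LHS](odd_double_half t) (negbTE ev) add0n /n divn2.
have n0 : 0 < n by rewrite /n; lia.
have nR : (1 <= INR n)%R by apply: (leq_INR (m := 1)).
have tR : INR t = (2 * INR n)%R by rewrite {1}tn INR_double.
have [D [D0 [hD1 hD2]]] := @exists_nat_above (INR n * delta) ltac:(nra).
have [F [sizeF sepF countF]] := gilbert_varshamov 'I_t n D0.
apply: (separated_pairs_of_seq (s := enum F)) => //.
- by move=> S; rewrite mem_enum; apply: sizeF.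
- move=> i j hi hj hij; rewrite -cardE in hi hj.
  have inF k : k < #|F| -> nth set0 (enum F) k \in F.
    by move=> hk; rewrite -mem_enum; apply: mem_nth; rewrite -cardE.
  have neq : nth set0 (enum F) i != nth set0 (enum F) j.
    by rewrite nth_uniq ?enum_uniq -?cardE //; apply/eqP.
  have := leq_INR (sepF _ _ (inF i hi) (inF j hj) neq).
  by rewrite tR; lra.
- have -> : INR t = INR n.*2 by rewrite -tn.
  rewrite -cardE; apply: (packing_size_lower_bound (D := D)) => //.
  by move: countF; rewrite card_ord (_ : t - n = n) -?tn //; lia.
Qed.

Theorem mainTheorem3 :
  forall delta : R, (0 <= delta)%R -> (delta < 1/2)%R ->
  exists c : R, (0 < c)%R /\
  forall m t : nat, 2 <= m -> 2 <= t -> ~~ odd t ->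
    let sigma := m ^ t in
    let alpha := (Rpower 2 (delta * INR t / 2) *
                  Rpower (INR m) ((1 - delta / 2) * INR t))%R in
    exists (g : nat) (X Y : nat -> seq nat),
      (INR g >= c * Rpower 2 ((1 - binent delta) * INR t))%R /\
      (forall i, i < g ->
         [/\ uniq (X i), uniq (Y i),
             all (fun x => x <= sigma) (X i),
             all (fun y => y <= sigma) (Y i) &
             [/\ size (X i) = m ^ (t %/ 2), size (Y i) = m ^ (t %/ 2)
               & size (sumset (X i) (Y i)) = sigma]]) /\
      (forall i j, i < g -> j < g -> i <> j ->
         (INR (size (sumset (X i) (Y j))) <= alpha)%R).
Proof.
move=> delta [d_pos | <-] d_half.
- exists (sqrt (delta * (1 - delta) / 128)); split.
    by apply: sqrt_lt_R0; apply: Rdiv_lt_0_compat; nra.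
  by move=> m t hm ht ev; apply: separated_pairs_pos => //; lra.
- exists 1%R; split; first lra.
  by move=> m t hm _ ev; apply: separated_pairs_delta0.
Qed.
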